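(* For $j=1,2$, let $G_j$ be a 2-step stratified Lie group with Lie algebra $\mathfrak{g}_j=\mathfrak{v}_j\oplus\mathfrak{z}_j$ and let $L_j$ be a sublaplacian on $G_j$ such that $(G_j,L_j)$ satisfies Assumption (A). Suppose $\dim\mathfrak{z}_1=\dim\mathfrak{z}_2$, and let $\phi:\mathfrak{z}_1\to\mathfrak{z}_2$ be a linear isomorphism. Let $G$ be the quotient of $G_1\times G_2$ obtained by identifying the centers via $\phi$, i.e. the connected simply connected group with Lie algebra $\mathfrak{v}_1\times\mathfrak{v}_2\times\mathfrak{z}_2$ and bracket $[(v_1,v_2,z),(v_1',v_2',z')]=(0,0,\phi([v_1,v_1'])+[v_2,v_2'])$, and let $L=L_1^\sharp+L_2^\sharp$, where $L_j^\sharp$ is the pushforward of $L_j$ to $G$. Then $(G,L)$ satisfies Assumption (A).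
   Context: For a 2-step group with Lie algebra $\mathfrak{g}=\mathfrak{v}\oplus\mathfrak{z}$ ($\mathfrak{z}$ the center, $\mathfrak{v}$ a complement), a sublaplacian $L=-\sum_jX_j^2$ ($\{X_j\}$ a basis of $\mathfrak{v}$) determines the inner product $\langle\cdot,\cdot\rangle$ on $\mathfrak{v}$ for which $\{X_j\}$ is orthonormal. For $\eta\in\mathfrak{z}^*$, $J_\eta$ is the endomorphism of $\mathfrak{v}$ with $\eta([x,x'])=\langle J_\eta x,x'\rangle$. Assumption (A): there exist integers $r_1,\dots,r_k>0$ and an orthogonal decomposition $\mathfrak{v}=\mathfrak{v}_1\oplus\dots\oplus\mathfrak{v}_k$ with orthogonal projections $P_j$ such that for all $\eta\in\mathfrak{z}^*\setminus\{0\}$ and all $j$, $J_\eta P_j=P_jJ_\eta$ and $J_\eta^2P_j$ has rank $2r_j$ and a unique nonzero eigenvalue. The pushforward $L_j^\sharp$ is the left-invariant operator $-\sum_l (X_{l}^{(j)})^2$ on $G$ obtained by regarding an orthonormal basis $\{X^{(j)}_l\}$ of $\mathfrak{v}_j$ as elements of $\mathfrak{v}_1\times\mathfrak{v}_2\times\mathfrak{z}_2$. *)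

(* Two-step Lie algebras g = v (+) z are encoded in
   coordinates: v = 'rV[R]_n with the orthonormal basis {X_j} of the
   sublaplacian mapped to the standard basis (so the sublaplacian inner
   product is the standard dot product), z = 'rV[R]_m, and the Lie bracket
   v x v -> z is a function br.  Linear maps act on row vectors on the right:
   the endomorphism T is encoded by the matrix M with T x = x *m M, hence the
   composition T1 o T2 is encoded by M2 *m M1. *)
From HB Require Import structures.
From mathcomp Require Import all_boot all_order all_algebra.
From mathcomp Require Import reals.
Set Implicit Arguments.
Unset Strict Implicit.
Unset Printing Implicit Defensive.
Import Order.TTheory GRing.Theory Num.Theory.
Local Open Scope ring_scope.

Section Defs.
Variable R : realType.

Definition dotv (n : nat) (u w : 'rV[R]_n) : R := (u *m w^T) 0 0.

Definition ebas (n : nat) (i : 'I_n) : 'rV[R]_n := delta_mx 0 i.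

(* br is the bracket of a 2-step stratified Lie algebra v (+) z
   (v = R^n, z = R^m) whose center is exactly z:
   bilinear, alternating, [v,v] spans z, z <> 0, and no nonzero element of v
   is central. *)
Definition two_step_strat (n m : nat) (br : 'rV[R]_n -> 'rV[R]_n -> 'rV[R]_m)
  : Prop :=
  (forall (a : R) x y w, br (a *: x + y) w = a *: br x w + br y w) /\
  (forall (a : R) x y w, br w (a *: x + y) = a *: br w x + br w y) /\
  (forall x, br x x = 0) /\
  (forall z : 'rV[R]_m, exists c : 'I_n -> 'I_n -> R,
      z = \sum_(i < n) \sum_(j < n) c i j *: br (ebas i) (ebas j)) /\
  (0 < m)%N /\
  (forall x, (forall y, br x y = 0) -> x = 0).

(* J_eta, for eta in z^* (identified with 'rV_m via the dual basis,
   eta(z) = dotv z eta): the endomorphism of v with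
   eta([x,x']) = < J_eta x, x' >, i.e. x *m Jmat br eta = J_eta x. *)
Definition Jmat (n m : nat) (br : 'rV[R]_n -> 'rV[R]_n -> 'rV[R]_m)
  (eta : 'rV[R]_m) : 'M[R]_n :=
  \matrix_(i < n, j < n) dotv (br (ebas i) (ebas j)) eta.

(* Assumption (A).  The orthogonal decomposition v = v_1 (+) ... (+) v_k is
   given through its orthogonal projections P_j (symmetric idempotents,
   pairwise orthogonal, summing to the identity). *)
Definition assumptionA (n m : nat) (br : 'rV[R]_n -> 'rV[R]_n -> 'rV[R]_m)
  : Prop :=
  exists (k : nat) (r : 'I_k -> nat) (P : 'I_k -> 'M[R]_n),
    (forall j, 0 < r j)%N /\
    (forall j, (P j)^T = P j) /\
    (forall j, P j *m P j = P j) /\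
    (forall i j, i != j -> P i *m P j = 0) /\
    \sum_(j < k) P j = 1%:M /\
    forall eta : 'rV[R]_m, eta != 0 -> forall j : 'I_k,
          let J := Jmat br eta in
          let A := P j *m (J *m J) in   (* encodes J_eta^2 P_j *)
          [/\ P j *m J = J *m P j,
              \rank A = (2 * r j)%N &
              exists lam : R, [/\ lam != 0, eigenvalue A lam &
                  forall mu : R, mu != 0 -> eigenvalue A mu -> mu = lam]].

(* Bracket of the quotient of G1 x G2 identifying the centers via phi:
   on v1 x v2 = 'rV_(n1 + n2),
   [(v1,v2),(v1',v2')] = phi([v1,v1']) + [v2,v2'], phi z = z *m Phi. *)
Definition glued_br (n1 n2 m : nat)
  (br1 : 'rV[R]_n1 -> 'rV[R]_n1 -> 'rV[R]_m)
  (br2 : 'rV[R]_n2 -> 'rV[R]_n2 -> 'rV[R]_m) (Phi : 'M[R]_m)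
  (x y : 'rV[R]_(n1 + n2)) : 'rV[R]_m :=
  br1 (lsubmx x) (lsubmx y) *m Phi + br2 (rsubmx x) (rsubmx y).

End Defs.

From mathcomp Require Import all_boot all_order all_algebra.
From mathcomp Require Import reals.
Set Implicit Arguments.
Unset Strict Implicit.
Unset Printing Implicit Defensive.
Import GRing.Theory.
Local Open Scope ring_scope.

(* In the coordinates v = v1 x v2 the glued bracket makes J_eta block
   diagonal, with blocks J_(eta o phi) for G1 and J_eta for G2; since phi is
   invertible, eta <> 0 forces eta o phi <> 0.  Hence the projections of G1
   and of G2, extended by zero to v1 x v2, form a decomposition for which
   every J_eta^2 P_j is a block J^2 P with a zero block beside it: same rank,
   same nonzero spectrum. *)

Section BlockDiagonal.
Variable F : fieldType.

Lemma mul_block_diag n1 n2 (A C : 'M[F]_n1) (B D : 'M[F]_n2) :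
  block_mx A 0 0 B *m block_mx C 0 0 D = block_mx (A *m C) 0 0 (B *m D).
Proof. by rewrite mulmx_block !mulmx0 !mul0mx !addr0 add0r. Qed.

Lemma summx_block_diag k n1 n2 (A : 'I_k -> 'M[F]_n1) (B : 'I_k -> 'M[F]_n2) :
  \sum_(i < k) block_mx (A i) 0 0 (B i) =
  block_mx (\sum_(i < k) A i) 0 0 (\sum_(i < k) B i).
Proof.
elim: k A B => [|k IHk] A B; first by rewrite !big_ord0 block_mx0.
by rewrite !big_ord_recr /= IHk add_block_mx !addr0.
Qed.

Lemma eigenvalue_block_diag n1 n2 (A : 'M[F]_n1) (B : 'M[F]_n2) mu :
  eigenvalue (block_mx A 0 0 B) mu = eigenvalue A mu || eigenvalue B mu.
Proof.
apply/eigenvalueP/orP.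
- case=> v; rewrite -[v]hsubmxK mul_row_block !mulmx0 addr0 add0r scale_row_mx.
  move=> /eq_row_mx [vA vB] v_nz.
  have [vl0|vl_nz] := eqVneq (lsubmx v) 0; last first.
    by left; apply/eigenvalueP; exists (lsubmx v).
  right; apply/eigenvalueP; exists (rsubmx v) => //.
  by apply: contraNneq v_nz => vr0; rewrite vl0 vr0 row_mx0.
- case=> /eigenvalueP [v vA v_nz].
  + exists (row_mx v 0); last by rewrite row_mx_eq0 negb_and v_nz.
    by rewrite mul_row_block !mulmx0 mul0mx !addr0 vA scale_row_mx scaler0.
  + exists (row_mx 0 v); last by rewrite row_mx_eq0 negb_and v_nz orbT.
    by rewrite mul_row_block !mul0mx !mulmx0 !addr0 add0r vA scale_row_mx scaler0.
Qed.

Lemma eigenvalue0 n mu : mu != 0 -> eigenvalue (0 : 'M[F]_n) mu = false.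
Proof.
move=> mu_nz; apply/eigenvalueP => -[v]; rewrite mulmx0 => /esym/eqP.
by rewrite scaler_eq0 (negPf mu_nz) /= => ->.
Qed.

Definition single_nonzero_eigen (r : nat) n (P J : 'M[F]_n) : Prop :=
  let A := P *m (J *m J) in
  [/\ P *m J = J *m P, \rank A = (2 * r)%N &
      exists lam, [/\ lam != 0, eigenvalue A lam &
                      forall mu, mu != 0 -> eigenvalue A mu -> mu = lam]].

Lemma single_nonzero_eigen_ul r n1 n2 (P J : 'M[F]_n1) (J2 : 'M[F]_n2) :
  single_nonzero_eigen r P J ->
  single_nonzero_eigen r (block_mx P 0 0 0) (block_mx J 0 0 J2).
Proof.
rewrite /single_nonzero_eigen; cbv zeta => -[PJ rkA [lam [lam_nz eig_lam eig_uniq]]].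
rewrite !mul_block_diag !mul0mx !mulmx0 PJ rank_diag_block_mx mxrank0 addn0.
split=> //; exists lam; split=> //; first by rewrite eigenvalue_block_diag eig_lam.
by move=> mu mu_nz; rewrite eigenvalue_block_diag eigenvalue0 // orbF; apply: eig_uniq.
Qed.

Lemma single_nonzero_eigen_dr r n1 n2 (J1 : 'M[F]_n1) (P J : 'M[F]_n2) :
  single_nonzero_eigen r P J ->
  single_nonzero_eigen r (block_mx 0 0 0 P) (block_mx J1 0 0 J).
Proof.
rewrite /single_nonzero_eigen; cbv zeta => -[PJ rkA [lam [lam_nz eig_lam eig_uniq]]].
rewrite !mul_block_diag !mul0mx !mulmx0 PJ rank_diag_block_mx mxrank0 add0n.
split=> //; exists lam; split=> //; first by rewrite eigenvalue_block_diag eig_lam orbT.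
by move=> mu mu_nz; rewrite eigenvalue_block_diag eigenvalue0 //; apply: eig_uniq.
Qed.

Definition orthogonal_resolution k n (P : 'I_k -> 'M[F]_n) : Prop :=
  [/\ forall j, (P j)^T = P j, forall j, P j *m P j = P j,
      forall i j, i != j -> P i *m P j = 0 & \sum_(j < k) P j = 1%:M].

Definition join_fam (T : Type) k1 k2 (f1 : 'I_k1 -> T) (f2 : 'I_k2 -> T)
    (j : 'I_(k1 + k2)) : T :=
  match split j with inl a => f1 a | inr b => f2 b end.

Definition diag_resolution k1 k2 n1 n2 (P1 : 'I_k1 -> 'M[F]_n1)
    (P2 : 'I_k2 -> 'M[F]_n2) : 'I_(k1 + k2) -> 'M[F]_(n1 + n2) :=
  join_fam (fun a => block_mx (P1 a) 0 0 0) (fun b => block_mx 0 0 0 (P2 b)).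

Lemma orthogonal_resolution_diag k1 k2 n1 n2 (P1 : 'I_k1 -> 'M[F]_n1)
    (P2 : 'I_k2 -> 'M[F]_n2) :
  orthogonal_resolution P1 -> orthogonal_resolution P2 ->
  orthogonal_resolution (diag_resolution P1 P2).
Proof.
rewrite /diag_resolution /join_fam.
case=> P1_sym P1_idem P1_orth P1_sum [P2_sym P2_idem P2_orth P2_sum]; split.
- by move=> j; case: split => a; rewrite tr_block_mx !trmx0 ?P1_sym ?P2_sym.
- by move=> j; case: split => a; rewrite mul_block_diag !mulmx0 ?P1_idem ?P2_idem.
- move=> i j; rewrite -[i]splitK -[j]splitK.
  case: (split i) => a; case: (split j) => b; rewrite !unsplitK /=;
    rewrite ?eq_lshift ?eq_rshift => ab; rewrite mul_block_diag !mulmx0 ?mul0mx;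
    by rewrite ?P1_orth ?P2_orth ?block_mx0.
rewrite big_split_ord /=.
under eq_bigr do rewrite -[lshift _ _]/(unsplit (inl _)) unsplitK.
under [X in _ + X]eq_bigr do rewrite -[rshift _ _]/(unsplit (inr _)) unsplitK.
rewrite !summx_block_diag add_block_mx !big1_eq P1_sum P2_sum.
by rewrite addr0 !add0r -scalar_mx_block.
Qed.

End BlockDiagonal.

Section GluedBracket.
Variable R : realType.

Lemma ebas_lshift n1 n2 (i : 'I_n1) : ebas R (lshift n2 i) = row_mx (ebas R i) 0.
Proof.
apply/matrixP => a b; rewrite /ebas !mxE.
case: (split_ordP b) => b' ->; rewrite ?row_mxEl ?row_mxEr !mxE ?eq_lshift //.
by rewrite eq_rlshift andbF.
Qed.

Lemma ebas_rshift n1 n2 (i : 'I_n2) : ebas R (rshift n1 i) = row_mx 0 (ebas R i).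
Proof.
apply/matrixP => a b; rewrite /ebas !mxE.
case: (split_ordP b) => b' ->; rewrite ?row_mxEl ?row_mxEr !mxE ?eq_rshift //.
by rewrite eq_lrshift andbF.
Qed.

Lemma dotv0 n (w : 'rV[R]_n) : dotv 0 w = 0.
Proof. by rewrite /dotv mul0mx mxE. Qed.

Lemma dotv_mulmx m (z eta : 'rV[R]_m) (Phi : 'M[R]_m) :
  dotv (z *m Phi) eta = dotv z (eta *m Phi^T).
Proof. by rewrite /dotv trmx_mul trmxK mulmxA. Qed.

Lemma two_step_strat_br0l n m (br : 'rV[R]_n -> 'rV[R]_n -> 'rV[R]_m) w :
  two_step_strat br -> br 0 w = 0.
Proof.
case=> linl _; have := linl 1 0 0 w; rewrite !scale1r addr0 => br0.
by apply: (addrI (br 0 w)); rewrite addr0 -br0.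
Qed.

Lemma two_step_strat_br0r n m (br : 'rV[R]_n -> 'rV[R]_n -> 'rV[R]_m) w :
  two_step_strat br -> br w 0 = 0.
Proof.
case=> _ [linr _]; have := linr 1 0 0 w; rewrite !scale1r addr0 => br0.
by apply: (addrI (br w 0)); rewrite addr0 -br0.
Qed.

Lemma Jmat_glued n1 n2 m (br1 : 'rV[R]_n1 -> 'rV[R]_n1 -> 'rV[R]_m)
    (br2 : 'rV[R]_n2 -> 'rV[R]_n2 -> 'rV[R]_m) (Phi : 'M[R]_m) eta :
  two_step_strat br1 -> two_step_strat br2 ->
  Jmat (glued_br br1 br2 Phi) eta =
  block_mx (Jmat br1 (eta *m Phi^T)) 0 0 (Jmat br2 eta).
Proof.
move=> S1 S2; apply/matrixP => i j; rewrite /Jmat /glued_br.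
case: (split_ordP i) => i' ->; case: (split_ordP j) => j' ->;
  rewrite ?block_mxEul ?block_mxEur ?block_mxEdl ?block_mxEdr [LHS]mxE [RHS]mxE
    ?ebas_lshift ?ebas_rshift ?row_mxKl ?row_mxKr
    ?(two_step_strat_br0l _ S1) ?(two_step_strat_br0r _ S1)
    ?(two_step_strat_br0l _ S2) ?(two_step_strat_br0r _ S2)
    ?mul0mx ?addr0 ?add0r ?dotv0 ?dotv_mulmx //.
Qed.

Lemma assumptionAE n m (br : 'rV[R]_n -> 'rV[R]_n -> 'rV[R]_m) :
  assumptionA br <->
  exists k (r : 'I_k -> nat) (P : 'I_k -> 'M[R]_n),
    [/\ forall j, (0 < r j)%N, orthogonal_resolution P &
        forall eta, eta != 0 -> forall j,
          single_nonzero_eigen (r j) (P j) (Jmat br eta)].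
Proof.
split.
  by case=> k [r [P [r_gt0 [Psym [Pidem [Porth [Psum HJ]]]]]]]; exists k, r, P.
by case=> k [r [P [r_gt0 [Psym Pidem Porth Psum] HJ]]]; exists k, r, P.
Qed.

End GluedBracket.

Theorem proposition6p2 (R : realType) (n1 n2 m : nat)
  (br1 : 'rV[R]_n1 -> 'rV[R]_n1 -> 'rV[R]_m)
  (br2 : 'rV[R]_n2 -> 'rV[R]_n2 -> 'rV[R]_m) (Phi : 'M[R]_m) :
  two_step_strat br1 -> assumptionA br1 ->
  two_step_strat br2 -> assumptionA br2 ->
  Phi \in unitmx ->
  assumptionA (glued_br br1 br2 Phi).
Proof.
move=> S1 /assumptionAE [k1 [r1 [P1 [r1_gt0 res1 HJ1]]]].
move=> S2 /assumptionAE [k2 [r2 [P2 [r2_gt0 res2 HJ2]]]] Phi_unit.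
apply/assumptionAE; exists (k1 + k2)%N, (join_fam r1 r2), (diag_resolution P1 P2).
split; first by move=> j; rewrite /join_fam; case: split.
  exact: orthogonal_resolution_diag.
move=> eta eta_nz j; rewrite Jmat_glued // /diag_resolution /join_fam.
case: split => a; last exact/single_nonzero_eigen_dr/HJ2.
apply/single_nonzero_eigen_ul/HJ1.
by rewrite mulmx_free_eq0 // row_free_unit unitmx_tr.
Qed.
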